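(* The exact category $\mathfrak{sl}(2)\text{-}\mathrm{Mod}_{\mathrm{tffr}}$ decomposes as the $\mathrm{Hom}$-orthogonal direct sum of the exact subcategories of generalized Casimir modules: $$\mathfrak{sl}(2)\text{-}\mathrm{Mod}_{\mathrm{tffr}}=\bigoplus_{\mu\in\mathbb{C}}\mathcal C^\bullet_{\mu,\mathrm{tffr}},$$ i.e. every finite rank torsion free module is a finite direct sum of $\mathfrak{sl}(2)$-submodules lying in $\mathcal C^\bullet_{\mu,\mathrm{tffr}}$ for pairwise distinct $\mu$, and $\mathrm{Hom}_{\mathfrak{sl}(2)}(A,B)=0$ for $A\in\mathcal C^\bullet_{\mu,\mathrm{tffr}}$, $B\in\mathcal C^\bullet_{\nu,\mathrm{tffr}}$, $\mu\neq\nu$. This is compatible with the coproduct decomposition $\mathcal C_{\mathrm{tffr}}=\coprod_{\mu\in\mathbb{C}}\mathcal C_{\mu,\mathrm{tffr}}$.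
   Context: $\mathfrak{sl}(2)$ has basis $L_{-1}=f$, $L_0=-\tfrac12 h$, $L_1=-e$ for a Chevalley basis $e,f,h$. Every $\mathfrak{sl}(2)$-module $(V,\rho)$ is a $\mathbb{C}[z]$-module via $z\cdot v=\rho(L_0)v$; $\mathfrak{sl}(2)\text{-}\mathrm{Mod}_{\mathrm{tffr}}$ is the full subcategory of modules that are torsion free as $\mathbb{C}[z]$-modules and of finite rank (finite $\mathbb{C}(z)$-dimension of the localization at $\mathbb{C}[z]\setminus\{0\}$), with the exact structure given by short exact sequences of $\mathfrak{sl}(2)$-modules with all terms in it. Casimir operator: $C_\rho=\rho(L_0)(\rho(L_0)-1)-\rho(L_{-1})\rho(L_1)$. $\mathcal C_{\mu,\mathrm{tffr}}$ (resp. $\mathcal C^\bullet_{\mu,\mathrm{tffr}}$) is the full subcategory of finite rank torsion free modules with $C_\rho=\mu\,\mathrm{Id}$ (resp. $(C_\rho-\mu)^n=0$ for some $n\ge1$); $\mathcal C_{\mathrm{tffr}}$ is the full subcategory of finite rank torsion free modules that are Casimir of some level. *)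

From HB Require Import structures.
From mathcomp Require Import all_boot all_order all_algebra.
From mathcomp Require Import reals complex.
Set Implicit Arguments. Unset Strict Implicit. Unset Printing Implicit Defensive.
Import Order.TTheory GRing.Theory Num.Theory.
Local Open Scope ring_scope.

(* An sl(2)-module structure on a C-vector space V, given by the images of the
   basis L_{-1} = f, L_0 = -h/2, L_1 = -e; these satisfy the relations
   [L_m, L_n] = (m - n) L_{m+n}, which are exactly the sl(2) bracket relations
   in this basis. *)
Record sl2mod (K : nzRingType) (V : lmodType K) := Sl2mod {
  Lm1 : {linear V -> V};
  L0  : {linear V -> V};
  L1  : {linear V -> V};
  rel_0m1 : forall v, L0 (Lm1 v) - Lm1 (L0 v) = Lm1 v;
  rel_1m1 : forall v, L1 (Lm1 v) - Lm1 (L1 v) = 2%:R *: L0 v;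
  rel_01  : forall v, L0 (L1 v) - L1 (L0 v) = - L1 v
}.

Section Defs.
Variables (K : nzRingType) (V : lmodType K) (M : sl2mod V).

(* C[z]-module structure: z . v = L0 v, so p . v = p(L0) v. *)
Definition pact (p : {poly K}) (v : V) : V :=
  \sum_(i < size p) p`_i *: iter i (L0 M) v.

Definition casimir (v : V) : V := L0 M (L0 M v) - L0 M v - Lm1 M (L1 M v).

Definition submodule (S : V -> Prop) : Prop :=
  [/\ S 0, (forall a u w, S u -> S w -> S (a *: u + w)),
      (forall u, S u -> S (Lm1 M u)), (forall u, S u -> S (L0 M u))
    & (forall u, S u -> S (L1 M u))].

Definition torsion_free_on (S : V -> Prop) : Prop :=
  forall (p : {poly K}) v, S v -> p != 0 -> pact p v = 0 -> v = 0.

(* finite rank: there is a bound n on the number of C[z]-linearly independent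
   elements (for torsion free modules this is the C(z)-dimension of the
   localization) *)
Definition finite_rank_on (S : V -> Prop) : Prop :=
  exists n : nat, forall v : 'I_n.+1 -> V, (forall i, S (v i)) ->
    exists c : 'I_n.+1 -> {poly K},
      (exists i, c i != 0) /\ \sum_(i < n.+1) pact (c i) (v i) = 0.

Definition gen_casimir_on (mu : K) (S : V -> Prop) : Prop :=
  exists n : nat, (1 <= n)%N /\
    forall v, S v -> iter n (fun w => casimir w - mu *: w) v = 0.

Definition torsion_free := torsion_free_on (fun _ => True).
Definition finite_rank := finite_rank_on (fun _ => True).
Definition gen_casimir mu := gen_casimir_on mu (fun _ => True).

Definition direct_sum (k : nat) (W : 'I_k -> V -> Prop) : Prop :=
  (forall v, exists w : 'I_k -> V, (forall i, W i (w i)) /\ v = \sum_(i < k) w i)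
  /\ (forall w w' : 'I_k -> V, (forall i, W i (w i)) -> (forall i, W i (w' i)) ->
        \sum_(i < k) w i = \sum_(i < k) w' i -> forall i, w i = w' i).

End Defs.

Definition sl2hom (K : nzRingType) (A B : lmodType K) (MA : sl2mod A) (MB : sl2mod B)
  (phi : {linear A -> B}) : Prop :=
  [/\ forall a, phi (Lm1 MA a) = Lm1 MB (phi a),
      forall a, phi (L0 MA a) = L0 MB (phi a)
    & forall a, phi (L1 MA a) = L1 MB (phi a)].

(* The Casimir operator Om commutes with L0, so by finite rank
   over C[z] (z acting as L0) and torsion freeness there is a nonzero
   P(z, w) in C[z][w] with P(L0, Om) = 0.  The operator L_{-1} is injective:
   a nonzero v with L_{-1} v = 0 yields nonzero vectors L_1^k v on which Om
   acts as (L0 + k)(L0 + k + 1), forcing infinitely many roots of P as a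
   polynomial in w.  Hence every vector has a nonzero C[z]-multiple in the
   image of L_{-1}, and as L_{-1} L0 = (L0 - 1) L_{-1} the annihilating ideal
   is stable under z |-> z - 1.  An annihilator of least w-degree is then fixed by this shift,
   so its coefficients are constants: Om satisfies a nonzero polynomial.  The
   module is therefore the direct sum of the generalized eigenspaces of Om,
   which are submodules since Om is central; sl(2)-maps intertwine the
   Casimirs, and coprimality of (X - mu)^m and (X - nu)^n kills every map
   between different levels. *)

From HB Require Import structures.
From mathcomp Require Import all_boot all_order all_algebra.
From mathcomp Require Import reals complex boolp.
Set Implicit Arguments. Unset Strict Implicit. Unset Printing Implicit Defensive.
Import GRing.Theory Num.Theory.
Local Open Scope ring_scope.

(** * Polynomials in an operator *)

Section PolyOp.
Variables (R : comNzRingType) (V : lmodType R).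

Definition polyop (f : V -> V) (p : {poly R}) (v : V) : V :=
  \sum_(i < size p) p`_i *: iter i f v.

Variable f : V -> V.

Lemma polyop_widen n (p : {poly R}) v : (size p <= n)%N ->
  polyop f p v = \sum_(i < n) p`_i *: iter i f v.
Proof.
move=> le_p_n; rewrite /polyop (big_ord_widen n (fun i => p`_i *: iter i f v)) //.
rewrite big_mkcond; apply: eq_bigr => i _.
by case: ltnP => // /(nth_default 0) ->; rewrite scale0r.
Qed.

Lemma polyopD (p q : {poly R}) v : polyop f (p + q) v = polyop f p v + polyop f q v.
Proof.
rewrite !(@polyop_widen (maxn (size p) (size q))) ?leq_maxl ?leq_maxr ?size_polyD //.
by rewrite -big_split; apply: eq_bigr => i _; rewrite coefD scalerDl.
Qed.

Lemma polyop0 v : polyop f 0 v = 0.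
Proof. by rewrite /polyop size_poly0 big_ord0. Qed.

Lemma polyopZ c (p : {poly R}) v : polyop f (c *: p) v = c *: polyop f p v.
Proof.
rewrite (@polyop_widen (size p)) ?size_scale_leq // scaler_sumr.
by apply: eq_bigr => i _; rewrite coefZ scalerA.
Qed.

Lemma polyopN (p : {poly R}) v : polyop f (- p) v = - polyop f p v.
Proof. by rewrite -(scaleN1r p) polyopZ scaleN1r. Qed.

Lemma polyopB (p q : {poly R}) v : polyop f (p - q) v = polyop f p v - polyop f q v.
Proof. by rewrite polyopD polyopN. Qed.

Lemma polyop_sum (I : Type) (r : seq I) (P : pred I) (F : I -> {poly R}) v :
  polyop f (\sum_(i <- r | P i) F i) v = \sum_(i <- r | P i) polyop f (F i) v.
Proof. exact: (big_morph (polyop f ^~ v) (fun p q => polyopD p q v) (polyop0 v)). Qed.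

Lemma polyopC c v : polyop f c%:P v = c *: v.
Proof. by rewrite (@polyop_widen 1) ?size_polyC ?leq_b1 // big_ord1 coefC. Qed.

Lemma polyop1 v : polyop f 1 v = v.
Proof. by rewrite -polyC1 polyopC scale1r. Qed.

Lemma polyopMX (p : {poly R}) v : polyop f (p * 'X) v = polyop f p (f v).
Proof.
rewrite (@polyop_widen (size p).+1); last first.
  by rewrite (leq_trans (size_polyMleq _ _)) // size_polyX addn2.
rewrite big_ord_recl coefMX eqxx scale0r add0r.
by apply: eq_bigr => i _; rewrite coefMX -iterSr.
Qed.

Lemma polyopX v : polyop f 'X v = f v.
Proof. by rewrite -['X]mul1r polyopMX polyop1. Qed.

End PolyOp.

Lemma polyop_morph (R : comNzRingType) (V W : lmodType R) (f : V -> V)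
  (g : W -> W) (phi : {linear V -> W}) (p : {poly R}) v :
  (forall u, phi (f u) = g (phi u)) -> phi (polyop f p v) = polyop g p (phi v).
Proof.
move=> phi_fg; rewrite linear_sum; apply: eq_bigr => i _; rewrite linearZ /=.
by congr (_ *: _); elim: (nat_of_ord i) => //= j IH; rewrite phi_fg IH.
Qed.

Lemma iter_linear (R : nzRingType) (V : lmodType R) (f : {linear V -> V}) n :
  linear (iter n f).
Proof. by elim: n => [//|n IH] a u v /=; rewrite IH linearP. Qed.

Lemma polyop_is_linear (R : comNzRingType) (V : lmodType R) (f : {linear V -> V})
  (p : {poly R}) : linear (polyop f p).
Proof.
move=> a u v; rewrite scaler_sumr -big_split; apply: eq_bigr => i _ /=.
by rewrite iter_linear scalerDr !scalerA mulrC.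
Qed.

HB.instance Definition _ (R : comNzRingType) (V : lmodType R) (f : {linear V -> V})
    (p : {poly R}) :=
  GRing.isLinear.Build R V V *:%R (polyop f p) (polyop_is_linear f p).

Section PolyOpLinear.
Variables (R : comNzRingType) (V : lmodType R) (f : {linear V -> V}).

Lemma polyopM (p q : {poly R}) v : polyop f (p * q) v = polyop f p (polyop f q v).
Proof.
elim/poly_ind: p v => [|p c IH] v; first by rewrite mul0r !polyop0.
rewrite mulrDl polyopD -mulrA (mulrC 'X) mulrA polyopMX IH mul_polyC polyopZ.
by rewrite polyopD polyopMX polyopC (polyop_morph (g := f) (phi := f)).
Qed.

Lemma polyop_shift (g : {linear V -> V}) a (p : {poly R}) v :
  (forall u, g (f u) = f (g u) + a *: g u) ->
  g (polyop f p v) = polyop f (p \Po ('X + a%:P)) (g v).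
Proof.
move=> g_f; elim/poly_ind: p v => [|p c IH] v.
  by rewrite !polyop0 comp_poly0 polyop0 linear0.
rewrite polyopD polyopMX polyopC linearD linearZ /= IH g_f.
rewrite comp_polyD comp_polyM comp_polyX comp_polyC polyopD polyopC.
by rewrite mulrDr polyopD polyopMX mulrC polyopM polyopC linearD linearZ.
Qed.

Lemma polyop_ker_stable (g : {linear V -> V}) (p : {poly R}) v :
  (forall u, g (f u) = f (g u)) -> polyop f p v = 0 -> polyop f p (g v) = 0.
Proof. by move=> g_f p_v; rewrite -(polyop_morph (f := f) (g := f) (phi := g)) // p_v linear0. Qed.

End PolyOpLinear.

Section PolyOp2.
Variables (R : comNzRingType) (V : lmodType R).

(* [P : {poly {poly R}}] is read as P(z, w) with outer variable w; z acts
   through f and w through g. *)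
Definition polyop2 (f g : V -> V) (P : {poly {poly R}}) (v : V) : V :=
  \sum_(j < size P) polyop f P`_j (iter j g v).

Variables f g : V -> V.

Lemma polyop2_widen n (P : {poly {poly R}}) v : (size P <= n)%N ->
  polyop2 f g P v = \sum_(j < n) polyop f P`_j (iter j g v).
Proof.
move=> le_P_n; rewrite /polyop2 (big_ord_widen n (fun j => polyop f P`_j (iter j g v))) //.
rewrite big_mkcond; apply: eq_bigr => j _.
by case: ltnP => // /(nth_default 0) ->; rewrite polyop0.
Qed.

Lemma polyop2D (P Q : {poly {poly R}}) v :
  polyop2 f g (P + Q) v = polyop2 f g P v + polyop2 f g Q v.
Proof.
rewrite !(@polyop2_widen (maxn (size P) (size Q))) ?leq_maxl ?leq_maxr ?size_polyD //.
by rewrite -big_split; apply: eq_bigr => i _; rewrite coefD polyopD.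
Qed.

Lemma polyop20 v : polyop2 f g 0 v = 0.
Proof. by rewrite /polyop2 size_poly0 big_ord0. Qed.

Lemma polyop2N (P : {poly {poly R}}) v : polyop2 f g (- P) v = - polyop2 f g P v.
Proof. by apply/eqP; rewrite -addr_eq0 -polyop2D addNr polyop20. Qed.

Lemma polyop2B (P Q : {poly {poly R}}) v :
  polyop2 f g (P - Q) v = polyop2 f g P v - polyop2 f g Q v.
Proof. by rewrite polyop2D polyop2N. Qed.

Lemma polyop2MX (P : {poly {poly R}}) v : polyop2 f g (P * 'X) v = polyop2 f g P (g v).
Proof.
rewrite (@polyop2_widen (size P).+1); last first.
  by rewrite (leq_trans (size_polyMleq _ _)) // size_polyX addn2.
rewrite big_ord_recl coefMX eqxx polyop0 add0r.
by apply: eq_bigr => i _; rewrite coefMX -iterSr.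
Qed.

Lemma polyop2C (c : {poly R}) v : polyop2 f g c%:P v = polyop f c v.
Proof. by rewrite (@polyop2_widen 1) ?size_polyC ?leq_b1 // big_ord1 coefC. Qed.

Lemma polyop2_polyC (p : {poly R}) v : polyop2 f g (map_poly polyC p) v = polyop g p v.
Proof.
rewrite (@polyop2_widen (size p)) ?size_map_polyC //.
by apply: eq_bigr => i _; rewrite coef_map polyopC.
Qed.

End PolyOp2.

Lemma polyop2_is_linear (R : comNzRingType) (V : lmodType R) (f g : {linear V -> V})
  (P : {poly {poly R}}) : linear (polyop2 f g P).
Proof.
move=> a u v; rewrite scaler_sumr -big_split; apply: eq_bigr => i _ /=.
by rewrite iter_linear linearP.
Qed.

HB.instance Definition _ (R : comNzRingType) (V : lmodType R) (f g : {linear V -> V})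
    (P : {poly {poly R}}) :=
  GRing.isLinear.Build R V V *:%R (polyop2 f g P) (polyop2_is_linear f g P).

Section PolyOp2Linear.
Variables (R : comNzRingType) (V : lmodType R) (f g : {linear V -> V}).

Lemma polyop2_morph (h : {linear V -> V}) (P : {poly {poly R}}) v :
  (forall u, h (f u) = f (h u)) -> (forall u, h (g u) = g (h u)) ->
  h (polyop2 f g P v) = polyop2 f g P (h v).
Proof.
move=> h_f h_g; rewrite linear_sum; apply: eq_bigr => j _.
rewrite (polyop_morph (g := f)) //; congr polyop.
by elim: (nat_of_ord j) => //= k IH; rewrite h_g IH.
Qed.

Lemma polyop2_shift (h : {linear V -> V}) a (P : {poly {poly R}}) v :
  (forall u, h (f u) = f (h u) + a *: h u) -> (forall u, h (g u) = g (h u)) ->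
  h (polyop2 f g P v) = polyop2 f g (map_poly (comp_poly ('X + a%:P)) P) (h v).
Proof.
move=> h_f h_g; rewrite [RHS](@polyop2_widen _ _ _ _ (size P)); last first.
  apply/leq_sizeP => j le_P_j.
  by rewrite coef_map_id0 ?comp_poly0 // nth_default // comp_poly0.
rewrite linear_sum; apply: eq_bigr => j _.
rewrite coef_map_id0 ?comp_poly0 // (polyop_shift _ _ h_f); congr polyop.
by elim: (nat_of_ord j) => //= k IH; rewrite h_g IH.
Qed.

Hypothesis fg_comm : forall u, f (g u) = g (f u).

Lemma polyop2CM (c : {poly R}) (Q : {poly {poly R}}) v :
  polyop2 f g (c%:P * Q) v = polyop f c (polyop2 f g Q v).
Proof.
rewrite mul_polyC (@polyop2_widen _ _ _ _ (size Q)) ?size_scale_leq // linear_sum.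
by apply: eq_bigr => i _; rewrite coefZ polyopM.
Qed.

Lemma polyop2M (P Q : {poly {poly R}}) v :
  polyop2 f g (P * Q) v = polyop2 f g P (polyop2 f g Q v).
Proof.
elim/poly_ind: P v => [|P c IH] v; first by rewrite mul0r !polyop20.
rewrite mulrDl polyop2D -mulrA (mulrC 'X) mulrA polyop2MX IH polyop2CM.
by rewrite polyop2D polyop2MX polyop2C (@polyop2_morph g).
Qed.

Lemma polyop2_eval (q : {poly R}) (P : {poly {poly R}}) w :
  g w = polyop f q w -> polyop2 f g P w = polyop f P.[q] w.
Proof.
move=> g_w.
have iter_g j : iter j g w = polyop f (q ^+ j) w.
  elim: j => [|j IH] /=; first by rewrite expr0 polyop1.
  by rewrite IH (polyop_morph (g := f)) // g_w exprSr polyopM.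
rewrite horner_coef polyop_sum; apply: eq_bigr => i _.
by rewrite iter_g polyopM.
Qed.

End PolyOp2Linear.

(** * The sl(2) relations and the Casimir operator *)

Section Sl2Relations.
Variables (K : nzRingType) (V : lmodType K) (M : sl2mod V).
Local Notation Lm := (Lm1 M).
Local Notation L := (L0 M).
Local Notation Lp := (L1 M).
Local Notation Om := (casimir M).

Lemma Lm1_L0 u : Lm (L u) = L (Lm u) - Lm u.
Proof. by rewrite -{2}(rel_0m1 M u) opprB addrC subrK. Qed.

Lemma L1_L0 u : Lp (L u) = L (Lp u) + Lp u.
Proof. by rewrite -{2}[Lp u]opprK -(rel_01 M u) opprB addrC subrK. Qed.

Lemma L1_Lm1 u : Lp (Lm u) = Lm (Lp u) + 2%:R *: L u.
Proof. by rewrite -(rel_1m1 M u) addrC subrK. Qed.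

Lemma Lm1_L1 u : Lm (Lp u) = Lp (Lm u) - 2%:R *: L u.
Proof. by rewrite L1_Lm1 addrK. Qed.

Lemma casimir_L1_Lm1 u : Om u = L (L u) + L u - Lp (Lm u).
Proof.
rewrite /casimir L1_Lm1 scaler_nat mulr2n !opprD !addrA.
by rewrite [in RHS](addrAC _ (- Lm _)) addrK addrAC.
Qed.

Lemma casimir_L0 u : Om (L u) = L (Om u).
Proof. by rewrite /casimir L1_L0 linearD Lm1_L0 !linearB subrK. Qed.

Lemma casimir_Lm1 u : Om (Lm u) = Lm (Om u).
Proof.
rewrite [in RHS]casimir_L1_Lm1 /casimir linearB linearD; congr (_ - _).
by rewrite Lm1_L0 subrK Lm1_L0 linearB.
Qed.

Lemma casimir_L1 u : Om (Lp u) = Lp (Om u).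
Proof.
rewrite casimir_L1_Lm1 /casimir !linearB; congr (_ - _).
by rewrite L1_L0 addrK L1_L0 linearD.
Qed.

Fact casimir_is_linear : linear Om.
Proof.
move=> a u w; rewrite /casimir !linearP /=.
by rewrite (addrACA (a *: L (L u))) (addrACA (a *: L (L u) + a *: - L u)) !scalerDr.
Qed.

End Sl2Relations.

HB.instance Definition _ (K : nzRingType) (V : lmodType K) (M : sl2mod V) :=
  GRing.isLinear.Build K V V *:%R (casimir M) (casimir_is_linear M).

(** * The shift z |-> z - 1 *)

Lemma comp_poly_XaddCK (R : comNzRingType) (a : R) (p : {poly R}) :
  p \Po ('X + a%:P) \Po ('X + (- a)%:P) = p.
Proof.
by rewrite -comp_polyA comp_polyD comp_polyX comp_polyC -addrA -polyCD addNr addr0 comp_polyXr.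
Qed.

Lemma comp_poly_shift_fixed (R : numDomainType) (u : {poly R}) :
  u \Po ('X + (-1)%:P) = u -> u = (u.[0])%:P.
Proof.
move=> u_fixed.
have u_at_negn k : u.[- k%:R] = u.[0].
  elim: k => [|k IH]; first by rewrite oppr0.
  by rewrite -IH -{2}u_fixed horner_comp !hornerE -opprD -mulrSr.
apply/eqP; rewrite -subr_eq0; apply: contraT => nz_u.
have := max_poly_roots nz_u (rs := [seq - (k%:R : R) | k <- iota 0 (size (u - (u.[0])%:P))]).
rewrite size_map size_iota ltnn map_inj_uniq ?iota_uniq; last first.
  by move=> i j /eqP; rewrite eqr_opp eqr_nat => /eqP.
apply=> //; apply/allP => x /mapP [k _ ->].
by rewrite rootE !hornerE u_at_negn subrr.
Qed.

Lemma size_sub_lt_lead (R : nzRingType) (p q : {poly R}) :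
  p != 0 -> (size q <= size p)%N -> q`_(size p).-1 = lead_coef p ->
  (size (p - q)%R < size p)%N.
Proof.
rewrite -size_poly_gt0 => pos_p le_qp top_q; rewrite -(prednK pos_p) ltnS.
apply/leq_sizeP => j; rewrite leq_eqVlt coefB => /orP [/eqP <-|lt_j].
  by rewrite top_q subrr.
have le_pj : (size p <= j)%N by rewrite -(prednK pos_p).
by rewrite !nth_default ?(leq_trans le_qp) ?subrr.
Qed.

Lemma size_sub_comp_poly_shift (R : idomainType) (u : {poly R}) : u != 0 ->
  (size (u - (u \Po ('X + (-1)%:P)))%R < size u)%N.
Proof.
have size_X1 : size ('X + (-1)%:P : {poly R}) = 2 by rewrite polyCN size_XsubC.
have size_comp := size_comp_poly2 u size_X1.
move=> nz_u; apply: size_sub_lt_lead; rewrite ?size_comp //.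
by rewrite -size_comp -lead_coefE lead_coef_comp ?size_X1 // polyCN lead_coefXsubC expr1n mulr1.
Qed.

Section ShiftCoefs.
Variable R : idomainType.
Implicit Types P : {poly {poly R}}.

Definition shift_coefs P := map_poly (comp_poly ('X + (-1)%:P)) P.

Lemma coef_shift_coefs P j : (shift_coefs P)`_j = P`_j \Po ('X + (-1)%:P).
Proof. by rewrite coef_map_id0 // comp_poly0. Qed.

Lemma size_shift_coefs P : (size (shift_coefs P) <= size P)%N.
Proof. by apply/leq_sizeP => j le_Pj; rewrite coef_shift_coefs nth_default // comp_poly0. Qed.

Lemma coef_sub_shift_coefs P j :
  (P - shift_coefs P)`_j = P`_j - (P`_j \Po ('X + (-1)%:P)).
Proof. by rewrite coefB coef_shift_coefs. Qed.

Lemma size_sub_shift_coefs P : (size (P - shift_coefs P)%R <= size P)%N.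
Proof. by rewrite (leq_trans (size_polyD _ _)) // size_polyN geq_max leqnn size_shift_coefs. Qed.

Lemma size_sub_shift_coefs_lt P : P != 0 ->
  lead_coef P \Po ('X + (-1)%:P) = lead_coef P -> (size (P - shift_coefs P)%R < size P)%N.
Proof.
move=> nz_P fixed_lc; apply: size_sub_lt_lead; rewrite ?size_shift_coefs //.
by rewrite coef_shift_coefs -lead_coefE fixed_lc.
Qed.

Lemma lead_coef_sub_shift_coefs P :
  lead_coef P \Po ('X + (-1)%:P) != lead_coef P ->
  size (P - shift_coefs P) = size P /\
  lead_coef (P - shift_coefs P) = lead_coef P - (lead_coef P \Po ('X + (-1)%:P)).
Proof.
move=> unfixed_lc; have top_coef : (P - shift_coefs P)`_(size P).-1 != 0.
  by rewrite coef_sub_shift_coefs -lead_coefE subr_eq0 eq_sym.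
have size_eq : size (P - shift_coefs P) = size P.
  apply/eqP; rewrite eqn_leq size_sub_shift_coefs /=.
  have pos_P : (0 < size P)%N.
    by rewrite size_poly_gt0; apply: contraNneq unfixed_lc => ->; rewrite lead_coef0 comp_poly0.
  rewrite -(prednK pos_P) ltnNge; apply: contra top_coef => /leq_sizeP -> //.
by split=> //; rewrite lead_coefE size_eq coef_sub_shift_coefs.
Qed.

End ShiftCoefs.

(** * A polynomial annihilating the Casimir operator *)

Section CasimirAnnihilator.
Variables (K : numDomainType) (V : lmodType K) (M : sl2mod V).
Hypotheses (tf : torsion_free M) (fr : finite_rank M).
Local Notation Lm := (Lm1 M).
Local Notation L := (L0 M).
Local Notation Lp := (L1 M).
Local Notation Om := (casimir M).

Lemma polyop_L0_eq0 (p : {poly K}) v : p != 0 -> polyop L p v = 0 -> v = 0.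
Proof. exact: tf. Qed.

Definition zfree m (e : nat -> V) := forall c : nat -> {poly K},
  \sum_(i < m) polyop L (c i) (e i) = 0 -> forall i, (i < m)%N -> c i = 0.

Lemma zfree_size_bound : exists n, forall m e, zfree m e -> (m <= n)%N.
Proof.
case: fr => n dep; exists n => m e free_e; rewrite leqNgt; apply/negP => lt_n_m.
have [c [[i nz_ci] sum_c]] := dep (fun i : 'I_n.+1 => e i) (fun=> I).
pose c' j := if (j < n.+1)%N then c (inord j) else 0.
suff /free_e/(_ i (leq_trans (ltn_ord i) lt_n_m)) : \sum_(j < m) polyop L (c' j) (e j) = 0.
  by rewrite /c' ltn_ord inord_val => c_i0; rewrite c_i0 eqxx in nz_ci.
have -> : \sum_(j < m) polyop L (c' j) (e j) = \sum_(j < n.+1) polyop L (c' j) (e j).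
  rewrite (big_ord_widen m (fun j => polyop L (c' j) (e j)) lt_n_m) [RHS]big_mkcond.
  apply: eq_bigr => j _.
  by rewrite /c'; case: ifP => // _; rewrite polyop0.
by rewrite -[RHS]sum_c; apply: eq_bigr => j _; rewrite /c' ltn_ord inord_val.
Qed.

Definition max_zfree r e := zfree r e /\ forall m e', zfree m e' -> (m <= r)%N.

Lemma exists_max_zfree : exists r e, max_zfree r e.
Proof.
have [n bound] := zfree_size_bound.
have ex0 : exists m, `[< exists e, zfree m e >].
  by exists 0%N; apply/asboolP; exists (fun=> 0) => c _ i.
have ub m : `[< exists e, zfree m e >] -> (m <= n)%N by move=> /asboolP [e /bound].
case: (ex_maxnP ex0 ub) => r /asboolP [e free_e] max_r.
by exists r, e; split => // m e' free_e'; apply: max_r; apply/asboolP; exists e'.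
Qed.

Lemma max_zfree_span r e : max_zfree r e ->
  forall v, exists q c, q != 0 /\ polyop L q v = \sum_(i < r) polyop L (c i) (e i).
Proof.
move=> [free_e max_r] v; pose e' j := if j == r then v else e j.
have : ~ zfree r.+1 e' by move/max_r; rewrite ltnn.
move=> /existsNP [c /not_implyP [sum_c /existsNP [i /not_implyP [le_i_r nz_ci]]]].
rewrite big_ord_recr /= /e' eqxx in sum_c.
have sum_e : \sum_(j < r) polyop L (c j) (e' j) = \sum_(j < r) polyop L (c j) (e j).
  by apply: eq_bigr => j _; rewrite /e' ltn_eqF.
rewrite /e' in sum_e; rewrite sum_e in sum_c.
have [c_r0|nz_cr] := eqVneq (c r) 0.
  move: sum_c; rewrite c_r0 polyop0 addr0 => /free_e c_e0; case: nz_ci.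
  by move: le_i_r; rewrite ltnS leq_eqVlt => /orP [/eqP ->|/c_e0].
exists (c r), (fun j => - c j); split => //.
move/eqP: sum_c; rewrite addrC addr_eq0 => /eqP ->.
by rewrite -sumrN; apply: eq_bigr => j _; rewrite polyopN.
Qed.

Let L0_casimir u : L (Om u) = Om (L u) := esym (casimir_L0 M u).

Definition annihilates (P : {poly {poly K}}) := forall v, polyop2 L Om P v = 0.

Lemma polyop2_L0 q P v : polyop2 L Om P (polyop L q v) = polyop L q (polyop2 L Om P v).
Proof.
rewrite (polyop2_morph (h := polyop L q)) // => u.
  by rewrite (polyop_morph (g := L) (phi := L)).
by rewrite (polyop_morph (g := L) (phi := Om)) //; exact: casimir_L0.
Qed.

Lemma exists_annihilator_at v :
  exists P : {poly {poly K}}, P != 0 /\ polyop2 L Om P v = 0.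
Proof.
case: fr => n dep.
have [c [[i nz_ci] sum_c]] := dep (fun i : 'I_n.+1 => iter i Om v) (fun=> I).
exists (\poly_(j < n.+1) c (inord j)); split.
  apply: contraNneq nz_ci => /(congr1 (fun P : {poly {poly K}} => P`_i)).
  by rewrite coef_poly ltn_ord inord_val coef0 => ->.
rewrite (@polyop2_widen _ _ _ _ n.+1) ?size_poly // -[RHS]sum_c.
by apply: eq_bigr => j _; rewrite coef_poly ltn_ord inord_val.
Qed.

Lemma exists_annihilator : exists P : {poly {poly K}}, P != 0 /\ annihilates P.
Proof.
have [r [e [free_e max_r]]] := exists_max_zfree.
have ann_e k : (k <= r)%N ->
    exists P, P != 0 /\ forall i, (i < k)%N -> polyop2 L Om P (e i) = 0.
  elim: k => [|k IH] le_k_r; first by exists 1; rewrite oner_neq0.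
  have [P [nz_P ann_P]] := IH (ltnW le_k_r).
  have [Q [nz_Q ann_Q]] := exists_annihilator_at (e k).
  exists (P * Q); rewrite mulf_neq0 //; split=> // i.
  rewrite ltnS leq_eqVlt => /orP [/eqP ->|lt_i_k].
    by rewrite (polyop2M L0_casimir) ann_Q linear0.
  by rewrite mulrC (polyop2M L0_casimir) ann_P // linear0.
have [P [nz_P ann_P]] := ann_e r (leqnn r).
exists P; split => // v.
have [q [c [nz_q span_v]]] := max_zfree_span (conj free_e max_r) v.
apply: (polyop_L0_eq0 nz_q); rewrite -polyop2_L0 span_v linear_sum big1 // => i _.
by rewrite -[LHS]/(polyop2 L Om P _) polyop2_L0 ann_P // linear0.
Qed.

Lemma L1_polyop_L0 p v : Lp (polyop L p v) = polyop L (p \Po ('X + 1%:P)) (Lp v).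
Proof. by apply: polyop_shift => u; rewrite L1_L0 scale1r. Qed.

Lemma Lm1_polyop_L0 p v : Lm (polyop L p v) = polyop L (p \Po ('X + (-1)%:P)) (Lm v).
Proof. by apply: polyop_shift => u; rewrite Lm1_L0 scaleN1r. Qed.

Section LowestWeightVector.
Variable v : V.
Hypothesis Lm_v : Lm v = 0.

(* The constant term is -k(k+1); only the coefficient of L0 matters. *)
Lemma Lm1_L1_iter k : exists b : K,
  Lm (iter k.+1 Lp v) = (- (2 * k.+1)%:R) *: L (iter k Lp v) + b *: iter k Lp v.
Proof.
elim: k => [|k [b IH]].
  by exists 0; rewrite /= Lm1_L1 Lm_v linear0 sub0r scale0r addr0 -scaleNr.
exists (- (2 * k.+1)%:R + b).
rewrite [iter k.+2 _ _]/= Lm1_L1 IH linearD !linearZ /= L1_L0.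
set c := - (2 * k.+1)%:R; set y := Lp (iter k Lp v).
have -> : - (2 * k.+2)%:R = c - 2%:R :> K by rewrite /c -opprD -natrD addn2 mulnS.
rewrite [c *: (_ + _)]scalerDr [(c - _) *: _]scalerBl [(c + _) *: _]scalerDl -!addrA; congr (_ + _).
by rewrite scalerN [LHS]addrA [LHS]addrC.
Qed.

Lemma L1_iter_neq0 k : v != 0 -> iter k Lp v != 0.
Proof.
move=> nz_v; elim: k => // k IH; apply: contraNneq IH => vk1_0.
have [b Lm_vk1] := Lm1_L1_iter k.
have nz_p : (- (2 * k.+1)%:R) *: 'X + b%:P != 0 :> {poly K}.
  apply: contraTneq isT => /(congr1 (coefp 1)) /=.
  rewrite coefD coefZ coefX coefC coef0 mulr1 addr0 => /eqP.
  by rewrite oppr_eq0 pnatr_eq0 muln_eq0.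
apply/eqP/(polyop_L0_eq0 nz_p).
by move: (congr1 Lm vk1_0); rewrite Lm_vk1 linear0 polyopD polyopZ polyopX polyopC.
Qed.

Lemma casimir_L1_iter k :
  Om (iter k Lp v) = polyop L (('X + k%:R%:P) * ('X + k.+1%:R%:P)) (iter k Lp v).
Proof.
elim: k => [|k IH].
  rewrite casimir_L1_Lm1 /= Lm_v linear0 subr0 polyopM !polyopD !polyopX !polyopC.
  by rewrite scale0r scale1r addr0 linearD.
rewrite [iter k.+1 _ _]/= casimir_L1 IH L1_polyop_L0; congr polyop.
rewrite comp_polyM !comp_polyD comp_polyX !comp_polyC.
by rewrite -!addrA -!polyCD -!mulrS.
Qed.

Lemma lowest_weight_eq0 : v = 0.
Proof.
apply/eqP; apply: contraT => nz_v.
have [P [nz_P ann_P]] := exists_annihilator.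
pose q k : {poly K} := ('X + k%:R%:P) * ('X + k.+1%:R%:P).
have root_q k : root P (q k).
  move: (L1_iter_neq0 k nz_v); apply: contraNT => nz_Pq; apply/eqP/(polyop_L0_eq0 nz_Pq).
  by rewrite -(polyop2_eval L0_casimir P (casimir_L1_iter k)) ann_P.
have inj_q : injective q.
  move=> j k /(congr1 (horner^~ 0)); rewrite /q !hornerE -natrM -natrM => /eqP.
  rewrite eqr_nat => /eqP jk; case: (ltngtP j k) => // lt_jk.
    by move: (ltn_mul lt_jk (lt_jk : j.+1 < k.+1)%N); rewrite jk ltnn.
  by move: (ltn_mul lt_jk (lt_jk : k.+1 < j.+1)%N); rewrite jk ltnn.
have := max_poly_roots nz_P (rs := map q (iota 0 (size P))).
rewrite size_map size_iota ltnn map_inj_uniq // iota_uniq; apply=> //.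
by apply/allP => _ /mapP [k _ ->].
Qed.

End LowestWeightVector.

Lemma Lm1_image_essential v : exists q u, q != 0 /\ polyop L q v = Lm u.
Proof.
have [r [e [free_e max_r]]] := exists_max_zfree.
have Lm_free : zfree r (fun i => Lm (e i)).
  move=> c sum_c i lt_ir; rewrite -[c i](comp_poly_XaddCK 1).
  suff -> : c i \Po ('X + 1%:P) = 0 by rewrite comp_poly0.
  apply: (free_e (fun j => c j \Po ('X + 1%:P))) lt_ir.
  apply: lowest_weight_eq0; rewrite linear_sum -[RHS]sum_c; apply: eq_bigr => j _.
  by rewrite /= Lm1_polyop_L0 comp_poly_XaddCK.
have [q [c [nz_q span_v]]] := max_zfree_span (conj Lm_free max_r) v.
exists q, (\sum_(i < r) polyop L (c i \Po ('X + 1%:P)) (e i)); split => //.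
rewrite span_v linear_sum; apply: eq_bigr => j _.
by rewrite /= Lm1_polyop_L0 comp_poly_XaddCK.
Qed.

Lemma annihilates_shift_coefs P : annihilates P -> annihilates (shift_coefs P).
Proof.
move=> ann_P v; have [q [u [nz_q q_v]]] := Lm1_image_essential v.
apply: (polyop_L0_eq0 nz_q); rewrite -polyop2_L0 q_v.
rewrite -(polyop2_shift (h := Lm)) ?ann_P ?linear0 // => w.
  by rewrite Lm1_L0 scaleN1r.
exact: esym (casimir_Lm1 M w).
Qed.

Lemma annihilates_sub_shift_coefs P : annihilates P -> annihilates (P - shift_coefs P).
Proof. by move=> ann_P v; rewrite polyop2B ann_P annihilates_shift_coefs // subr0. Qed.

Lemma annihilator_const_lead (P : {poly {poly K}}) d :
  P != 0 -> annihilates P -> size P = d ->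
  exists P' : {poly {poly K}},
    [/\ P' != 0, annihilates P', size P' = d & (size (lead_coef P') <= 1)%N].
Proof.
move=> nz_P ann_P size_P.
have ex_s : exists s, `[< exists P' : {poly {poly K}},
    [/\ P' != 0, annihilates P', size P' = d & size (lead_coef P') = s] >].
  by exists (size (lead_coef P)); apply/asboolP; exists P.
case: (ex_minnP ex_s) => s /asboolP [{}P [{}nz_P {}ann_P {}size_P <-]] min_s.
exists P; split => //; rewrite leqNgt; apply/negP => nonconst_lc.
(* P - shift_coefs P has the same size as P and a lead coefficient of lower
   degree, contradicting the choice of P. *)
have unfixed_lc : lead_coef P \Po ('X + (-1)%:P) != lead_coef P.
  apply: contraTneq nonconst_lc => /comp_poly_shift_fixed ->.
  by rewrite size_polyC -leqNgt leq_b1.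
have [size_Q lead_Q] := lead_coef_sub_shift_coefs unfixed_lc.
have /min_s : `[< exists Q : {poly {poly K}}, [/\ Q != 0, annihilates Q, size Q = d
    & size (lead_coef Q) = size (lead_coef (P - shift_coefs P))] >].
  apply/asboolP; exists (P - shift_coefs P); split; rewrite ?size_Q //.
    by rewrite -size_poly_gt0 size_Q size_poly_gt0.
  exact: annihilates_sub_shift_coefs.
by rewrite lead_Q leqNgt size_sub_comp_poly_shift // lead_coef_eq0.
Qed.

Lemma min_annihilator_polyC (P : {poly {poly K}}) :
  (forall Q, Q != 0 -> annihilates Q -> (size P <= size Q)%N) -> P != 0 -> annihilates P ->
  (size (lead_coef P) <= 1)%N -> P = map_poly polyC (map_poly (horner^~ 0) P).
Proof.
move=> min_P nz_P ann_P const_lc.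
have fixed_lc : lead_coef P \Po ('X + (-1)%:P) = lead_coef P.
  by rewrite (size1_polyC const_lc) comp_polyC.
have Q0 : P - shift_coefs P = 0.
  apply: contraTeq (size_sub_shift_coefs_lt nz_P fixed_lc) => nz_Q.
  by rewrite -leqNgt; apply: min_P nz_Q (annihilates_sub_shift_coefs ann_P).
apply/polyP => j; rewrite coef_map coef_map_id0 ?horner0 //=.
move/(congr1 (coefp j)): Q0; rewrite /= coef_sub_shift_coefs coef0 => /eqP.
by rewrite subr_eq0 => /eqP/esym/comp_poly_shift_fixed.
Qed.

Lemma casimir_annihilator : exists p : {poly K}, p != 0 /\ forall v, polyop Om p v = 0.
Proof.
have [P0 [nz_P0 ann_P0]] := exists_annihilator.
have ex_d : exists d, `[< exists P : {poly {poly K}}, [/\ P != 0, annihilates P & size P = d] >].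
  by exists (size P0); apply/asboolP; exists P0.
case: (ex_minnP ex_d) => d /asboolP [P [nz_P ann_P size_P]] min_d.
have {}min_d Q : Q != 0 -> annihilates Q -> (d <= size Q)%N.
  by move=> nz_Q ann_Q; apply: min_d; apply/asboolP; exists Q.
have [{}P [{}nz_P {}ann_P {}size_P const_lc]] := annihilator_const_lead nz_P ann_P size_P.
rewrite -size_P in min_d.
have P_eq := min_annihilator_polyC min_d nz_P ann_P const_lc.
exists (map_poly (horner^~ 0) P); split.
  by apply: contraNneq nz_P => p0; rewrite P_eq p0 map_poly0.
by move=> v; rewrite -(polyop2_polyC L) -P_eq.
Qed.

End CasimirAnnihilator.

(** * Generalized eigenspaces *)

Section GeneralizedEigenspaces.
Variables (F : fieldType) (V : lmodType F) (f : {linear V -> V}).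

Lemma iter_sub_scale_polyop (mu : F) n v :
  iter n (fun w => f w - mu *: w) v = polyop f (('X - mu%:P) ^+ n) v.
Proof.
elim: n => [|n IH] /=; first by rewrite expr0 polyop1.
by rewrite IH exprS polyopM polyopB polyopX polyopC.
Qed.

Lemma polyop_coprime_eq0 (p q : {poly F}) v : coprimep p q ->
  polyop f p v = 0 -> polyop f q v = 0 -> v = 0.
Proof.
move=> /Bezout_eq1_coprimepP [[a b] /= Bezout] p_v q_v.
by rewrite -(polyop1 f v) -Bezout polyopD !polyopM p_v q_v !linear0 addr0.
Qed.

Lemma polyop_coprime_split (p q : {poly F}) v : coprimep p q ->
  polyop f (p * q) v = 0 ->
  exists x y, [/\ v = x + y, polyop f p x = 0 & polyop f q y = 0].
Proof.
move=> /Bezout_eq1_coprimepP [[a b] /= Bezout] pq_v.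
exists (polyop f (b * q) v), (polyop f (a * p) v); split.
- by rewrite addrC -polyopD Bezout polyop1.
- by rewrite -polyopM mulrCA polyopM pq_v linear0.
- by rewrite -polyopM mulrCA (mulrC q) polyopM pq_v linear0.
Qed.

Lemma coprimep_XsubC_exp (a b : F) i j : a != b ->
  coprimep (('X - a%:P) ^+ i) (('X - b%:P) ^+ j).
Proof.
by move=> neq_ab; rewrite coprimep_expl ?coprimep_expr ?coprimep_XsubC2 // subr_eq0 eq_sym.
Qed.

Lemma coprimep_XsubC_exp_prod (a : F) (bs : seq F) (e : F -> nat) i :
  a \notin bs -> coprimep (('X - a%:P) ^+ i) (\prod_(b <- bs) ('X - b%:P) ^+ e b).
Proof.
move=> a_bs; rewrite big_seq; apply: (big_ind (coprimep _)) => [|x y|b b_bs].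
- exact: coprimep1.
- by rewrite coprimepMr => -> ->.
by apply: coprimep_XsubC_exp; apply: contraNneq a_bs => ->.
Qed.

Lemma gen_eigenspace_sum (mus : seq F) (e : F -> nat) v : uniq mus ->
  polyop f (\prod_(mu <- mus) ('X - mu%:P) ^+ e mu) v = 0 ->
  exists w : F -> V,
    (forall mu, polyop f (('X - mu%:P) ^+ e mu) (w mu) = 0) /\ v = \sum_(mu <- mus) w mu.
Proof.
elim: mus v => [|mu mus IH] v.
  move=> _; rewrite big_nil polyop1 => ->.
  by exists (fun=> 0); split => [mu|]; rewrite ?big_nil // linear0.
rewrite cons_uniq big_cons => /andP [mu_mus uniq_mus] prod_v.
have coprime_mu := coprimep_XsubC_exp_prod e (e mu) mu_mus.
have [x [y [-> x_mu y_mus]]] := polyop_coprime_split coprime_mu prod_v.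
have [w [w_eig ->]] := IH y uniq_mus y_mus.
exists (fun nu => if nu == mu then x else w nu); split.
  by move=> nu; case: eqP => [->|].
rewrite big_cons eqxx; congr (_ + _); rewrite big_seq_cond [RHS]big_seq_cond.
by apply: eq_bigr => nu /andP [nu_mus _]; case: eqP => // nu_mu; rewrite -nu_mu nu_mus in mu_mus.
Qed.

Lemma gen_eigenspace_sum_eq0 k (mu : 'I_k -> F) (n : 'I_k -> nat) (w : 'I_k -> V) :
  injective mu -> (forall i, polyop f (('X - (mu i)%:P) ^+ n i) (w i) = 0) ->
  \sum_i w i = 0 -> forall i, w i = 0.
Proof.
move=> inj_mu w_eig sum_w i.
pose q := \prod_(j | j != i) ('X - (mu j)%:P) ^+ n j.
have q_w j : j != i -> polyop f q (w j) = 0.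
  by move=> ji; rewrite /q (bigD1 j) //= mulrC polyopM w_eig linear0.
apply: (polyop_coprime_eq0 (q := q) _ (w_eig i)).
  apply: (big_ind (coprimep _)) => [|x y|j ji]; first exact: coprimep1.
    by rewrite coprimepMr => -> ->.
  by apply: coprimep_XsubC_exp; apply: contraNneq ji => /inj_mu ->.
by move/(congr1 (polyop f q)): sum_w; rewrite linear_sum linear0 (bigD1 i) //= big1 ?addr0.
Qed.

End GeneralizedEigenspaces.

Lemma gen_eigenspace_decomposition (F : closedFieldType) (V : lmodType F)
    (f : {linear V -> V}) (p : {poly F}) :
  p != 0 -> (forall v, polyop f p v = 0) ->
  exists k (mu : 'I_k -> F) (n : 'I_k -> nat), [/\ injective mu, forall i, (0 < n i)%N
    & direct_sum (fun i v => polyop f (('X - (mu i)%:P) ^+ n i) v = 0)].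
Proof.
move=> nz_p p_f; have [rs p_eq] := closed_field_poly_normal p.
pose mus := undup rs; pose e mu := count_mem mu rs.
pose mu (i : 'I_(size mus)) := nth 0 mus i.
have prod_f v : polyop f (\prod_(nu <- mus) ('X - nu%:P) ^+ e nu) v = 0.
  apply/eqP; move: (p_f v); rewrite {1}p_eq prodr_undup_exp_count polyopZ => /eqP.
  by rewrite scaler_eq0 lead_coef_eq0 (negbTE nz_p).
have inj_mu : injective mu.
  by move=> i j /eqP; rewrite nth_uniq ?undup_uniq // => /eqP /val_inj.
exists (size mus), mu, (fun i => e (mu i)); split=> //.
  by move=> i; rewrite -has_count has_pred1 -mem_undup mem_nth.
split=> [v|w w' w_eig w'_eig sum_ww' i].
  have [w [w_eig v_eq]] := gen_eigenspace_sum (undup_uniq rs) (prod_f v).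
  exists (fun i => w (mu i)); split => [i|]; first exact: w_eig.
  by rewrite v_eq (big_nth 0) big_mkord.
apply/eqP; rewrite -subr_eq0; apply/eqP; move: i.
apply: (gen_eigenspace_sum_eq0 (f := f) (n := fun i => e (mu i))
         (w := fun i => w i - w' i) inj_mu) => [i|].
  by rewrite linearB /= w_eig w'_eig subrr.
by rewrite sumrB sum_ww' subrr.
Qed.

Lemma gen_eigen_intertwiner_eq0 (F : fieldType) (A B : lmodType F)
    (f : {linear A -> A}) (g : {linear B -> B}) (phi : {linear A -> B}) (mu nu : F) m n :
  mu != nu -> (forall a, polyop f (('X - mu%:P) ^+ m) a = 0) ->
  (forall b, polyop g (('X - nu%:P) ^+ n) b = 0) ->
  (forall a, phi (f a) = g (phi a)) -> forall a, phi a = 0.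
Proof.
move=> neq_mu_nu f_mu g_nu phi_fg a.
apply: (polyop_coprime_eq0 (coprimep_XsubC_exp m n neq_mu_nu) _ (g_nu _)).
by rewrite -(polyop_morph _ _ phi_fg) f_mu linear0.
Qed.

Lemma sl2hom_casimir (K : nzRingType) (A B : lmodType K) (MA : sl2mod A) (MB : sl2mod B)
    (phi : {linear A -> B}) :
  sl2hom MA MB phi -> forall a, phi (casimir MA a) = casimir MB (phi a).
Proof. by move=> [phi_Lm phi_L phi_Lp] a; rewrite /casimir !linearB /= !phi_L phi_Lm phi_Lp. Qed.

Lemma sl2hom_gen_casimir_eq0 (K : fieldType) (A B : lmodType K) (MA : sl2mod A)
    (MB : sl2mod B) (mu nu : K) :
  mu != nu -> gen_casimir MA mu -> gen_casimir MB nu ->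
  forall phi : {linear A -> B}, sl2hom MA MB phi -> forall a, phi a = 0.
Proof.
move=> neq_mu_nu [m [_ A_mu]] [n [_ B_nu]] phi /sl2hom_casimir phi_casimir.
apply: (gen_eigen_intertwiner_eq0 neq_mu_nu _ _ phi_casimir) => [a|b].
  by rewrite -iter_sub_scale_polyop; apply: A_mu.
by rewrite -iter_sub_scale_polyop; apply: B_nu.
Qed.

Lemma casimir_gen_eigenspace_decomposition (K : numClosedFieldType) (V : lmodType K)
    (M : sl2mod V) :
  torsion_free M -> finite_rank M ->
  exists (k : nat) (mu : 'I_k -> K) (W : 'I_k -> V -> Prop),
    injective mu /\
    (forall i, submodule M (W i)) /\
    (forall i, [/\ torsion_free_on M (W i), finite_rank_on M (W i)
                 & gen_casimir_on M (mu i) (W i)]) /\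
    direct_sum W.
Proof.
move=> tf fr; have [p [nz_p p_Om]] := casimir_annihilator tf fr.
have [k [mu [n [inj_mu pos_n dsum]]]] := gen_eigenspace_decomposition nz_p p_Om.
exists k, mu, (fun i v => polyop (casimir M) (('X - (mu i)%:P) ^+ n i) v = 0).
split=> //; split; last split=> //.
- move=> i; split=> [|a u w u_i w_i|u|u|u]; rewrite ?linear0 //.
  + by rewrite linearP /= u_i w_i scaler0 addr0.
  + by apply: polyop_ker_stable => w; apply/esym/casimir_Lm1.
  + by apply: polyop_ker_stable => w; apply/esym/casimir_L0.
  + by apply: polyop_ker_stable => w; apply/esym/casimir_L1.
- move=> i; split.
  + by move=> q v _; apply: tf.
  + by case: fr => N dep; exists N => vs _; apply: dep.
  + by exists (n i); split=> // v; rewrite iter_sub_scale_polyop.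
Qed.

Theorem theorem7p9 (R : realType) :
  (* every finite rank torsion free module is a finite direct sum of submodules
     in C^bullet_{mu_i,tffr} with pairwise distinct mu_i *)
  (forall (V : lmodType (complex R)) (M : sl2mod V),
     torsion_free M -> finite_rank M ->
     exists (k : nat) (mu : 'I_k -> complex R) (W : 'I_k -> V -> Prop),
       injective mu /\
       (forall i, submodule M (W i)) /\
       (forall i, [/\ torsion_free_on M (W i), finite_rank_on M (W i)
                    & gen_casimir_on M (mu i) (W i)]) /\
       direct_sum W) /\
  (* Hom-orthogonality *)
  (forall (A B : lmodType (complex R)) (MA : sl2mod A) (MB : sl2mod B)
          (mu nu : complex R),
     mu != nu ->
     torsion_free MA -> finite_rank MA -> gen_casimir MA mu ->
     torsion_free MB -> finite_rank MB -> gen_casimir MB nu ->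
     forall phi : {linear A -> B}, sl2hom MA MB phi -> forall a, phi a = 0).
Proof.
split=> [V M|A B MA MB mu nu neq_mu_nu _ _ A_mu _ _ B_nu].
  exact: casimir_gen_eigenspace_decomposition.
exact: sl2hom_gen_casimir_eq0 neq_mu_nu A_mu B_nu.
Qed.
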